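(* Let $\varphi(z,x,y)$ satisfy Conditions (C1)–(C5) described in the context, be twice continuously differentiable in $z$, and satisfy $\varphi''(z,x,y)\ge c_7z^{-2}\varphi(z,x,y)$ for $z>0$ and a.e. $(x,y)$, with a constant $c_7$ independent of $z,x,y$. Let $\psi(z,x,y)$ be non-negative, non-decreasing and twice continuously differentiable in $z$ for a.e. $(x,y)\in\Omega\times\Omega$, satisfy Conditions (C1), (C4), (C5), and the estimate $$\psi''(z,x,y)\ge -c_9z^{-1}\psi'(z,x,y)-c_{10}z^{-2}\psi(z,x,y)\quad\text{for a.e. }(x,y),$$ where $c_9<2$ and $c_{10}<c_7$ are constants independent of $z,x,y$. Suppose also that for some $q\ge0$ independent of $z,x,y$ the function $z\mapsto\psi(z,x,y)/z^q$ is non-increasing for a.e. $(x,y)$. Then the function $\psi(z,x,y)\varphi(z,x,y)$ satisfies Conditions (C1)–(C5).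
   Context: Let $\Omega\subseteq\mathbb R^d$ be a domain; functions in $L_{1,loc}(\Omega)$ are complex-valued; derivatives $'$ are with respect to $z$. A real function $r$ on $[0,\infty)$ is almost increasing (resp. almost decreasing) with constant $\beta\ge1$ if $r(s)\le\beta r(t)$ (resp. $\beta r(s)\ge r(t)$) for all $0\le s\le t$. For a function $\theta:[0,\infty)\times\Omega\times\Omega\to[0,\infty)$: (C1) for each $u\in L_{1,loc}(\Omega)$ the function $(x,y)\mapsto\theta(|u(x)-u(y)|,x,y)$ is measurable on $\Omega\times\Omega$; (C2) for every $\varepsilon>0$ there is $\delta\in(0,1)$ such that $\theta(\frac{s+t}{2},x,y)\le(1-\delta)\frac{\theta(s,x,y)+\theta(t,x,y)}{2}$ for a.e. $(x,y)$ and all $s,t>0$ with $|s-t|\ge\varepsilon\max\{s,t\}$; (C3) there are constants $1<p_-\le p_+$ and $\beta\ge1$ such that for a.e. $(x,y)$ the function $t\mapsto\theta(t,x,y)/t^{p_-}$ is almost increasing with constant $\beta$ and $t\mapsto\theta(t,x,y)/t^{p_+}$ is almost decreasing with constant $\beta$; (C4) for a.e. $(x,y)$: $c_1^{-1}\le\theta(1,x,y)\le c_1$ with some constant $c_1>0$, $\theta(0,x,y)=0$, and $\theta(t,x,y)>0$ for $t>0$; (C5) for a.e. $(x,y)$, $\theta(t,x,y)$ is differentiable in $t>0$ and $0<t\theta'(t,x,y)\le c_2\theta(t,x,y)$ for $t>0$, with some constant $c_2>1$. *)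

From HB Require Import structures.
From mathcomp Require Import all_boot all_order all_algebra.
From mathcomp Require Import all_classical all_reals all_analysis.

Set Implicit Arguments.
Unset Strict Implicit.
Unset Printing Implicit Defensive.

Import Order.TTheory GRing.Theory Num.Theory.
Import numFieldNormedType.Exports.

Local Open Scope classical_set_scope.
Local Open Scope ring_scope.

Definition box {R : realType} {n : nat} (a b : 'rV[R]_n) : set 'rV[R]_n :=
  [set x | forall i : 'I_n, a ord0 i <= x ord0 i <= b ord0 i].

Definition boxvol {R : realType} {n : nat} (a b : 'rV[R]_n) : R :=
  \prod_(i < n) (b ord0 i - a ord0 i).

Definition lebesgue_outer {R : realType} {n : nat} (A : set 'rV[R]_n) : \bar R :=
  ereal_inf [set S : \bar R | exists a b : nat -> 'rV[R]_n,
    (forall k i, a k ord0 i <= b k ord0 i) /\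
    A `<=` \bigcup_k box (a k) (b k) /\
    S = (\sum_(0 <= k <oo) (boxvol (a k) (b k))%:E)%E].

Definition Lmeasurable {R : realType} {n : nat} (E : set 'rV[R]_n) : Prop :=
  forall A : set 'rV[R]_n,
    lebesgue_outer A = (lebesgue_outer (A `&` E) + lebesgue_outer (A `\` E))%E.

Definition Lmeasurable_fun {R : realType} {n : nat} (D : set 'rV[R]_n)
  (f : 'rV[R]_n -> R) : Prop :=
  forall a : R, Lmeasurable (D `&` [set x | a < f x]).

(** Finiteness of the Lebesgue integral over K of a nonnegative function g:
    the integrals of the nonnegative simple functions below g on K
    (sup of which is the Lebesgue integral) are bounded. *)
Definition finite_integral {R : realType} {n : nat} (K : set 'rV[R]_n)
  (g : 'rV[R]_n -> R) : Prop :=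
  exists M : R, forall (m : nat) (E : 'I_m -> set 'rV[R]_n) (c : 'I_m -> R),
    (forall j, Lmeasurable (E j) /\ E j `<=` K /\ 0 <= c j /\
               (forall x, E j x -> c j <= g x)) ->
    (forall j k, j != k -> E j `&` E k = set0) ->
    (\sum_(j < m) ((c j)%:E * lebesgue_outer (E j)) <= M%:E)%E.

(** A complex-valued function u = u1 + i u2 on Omega is in L_{1,loc}(Omega) *)
Definition L1loc {R : realType} {d : nat} (Om : set 'rV[R]_d)
  (u1 u2 : 'rV[R]_d -> R) : Prop :=
  Lmeasurable_fun Om u1 /\ Lmeasurable_fun Om u2 /\
  forall K : set 'rV[R]_d, compact K -> K `<=` Om ->
    finite_integral K (fun x => Num.sqrt (u1 x ^+ 2 + u2 x ^+ 2)).

Definition pairs_to_row {R : realType} {d : nat}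
  (S : set ('rV[R]_d * 'rV[R]_d)) : set 'rV[R]_(d + d) :=
  [set row_mx p.1 p.2 | p in S].

Definition ae_pairs {R : realType} {d : nat} (Om : set 'rV[R]_d)
  (P : 'rV[R]_d -> 'rV[R]_d -> Prop) : Prop :=
  lebesgue_outer (pairs_to_row [set p | Om p.1 /\ Om p.2 /\ ~ P p.1 p.2]) = 0%E.

Definition measurable_on_pairs {R : realType} {d : nat} (Om : set 'rV[R]_d)
  (g : 'rV[R]_d -> 'rV[R]_d -> R) : Prop :=
  Lmeasurable_fun (pairs_to_row [set p | Om p.1 /\ Om p.2])
    (fun z => g (lsubmx z) (rsubmx z)).

Definition almost_increasing {R : realType} (beta : R) (r : R -> R) : Prop :=
  forall s t, 0 < s -> s <= t -> r s <= beta * r t.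
Definition almost_decreasing {R : realType} (beta : R) (r : R -> R) : Prop :=
  forall s t, 0 < s -> s <= t -> r t <= beta * r s.

(** Conditions (C1)-(C5) for theta : [0,oo) x Omega x Omega -> [0,oo) *)
Definition C1 {R : realType} {d : nat} (Om : set 'rV[R]_d)
  (th : R -> 'rV[R]_d -> 'rV[R]_d -> R) : Prop :=
  forall u1 u2 : 'rV[R]_d -> R, L1loc Om u1 u2 ->
    measurable_on_pairs Om
      (fun x y => th (Num.sqrt ((u1 x - u1 y) ^+ 2 + (u2 x - u2 y) ^+ 2)) x y).

Definition C2 {R : realType} {d : nat} (Om : set 'rV[R]_d)
  (th : R -> 'rV[R]_d -> 'rV[R]_d -> R) : Prop :=
  forall eps : R, 0 < eps -> exists delta : R, 0 < delta < 1 /\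
    ae_pairs Om (fun x y => forall s t : R, 0 < s -> 0 < t ->
      eps * Num.max s t <= `|s - t| ->
      th ((s + t) / 2) x y <= (1 - delta) * ((th s x y + th t x y) / 2)).

Definition C3 {R : realType} {d : nat} (Om : set 'rV[R]_d)
  (th : R -> 'rV[R]_d -> 'rV[R]_d -> R) : Prop :=
  exists pm pp beta : R, 1 < pm /\ pm <= pp /\ 1 <= beta /\
    ae_pairs Om (fun x y =>
      almost_increasing beta (fun t => th t x y / t `^ pm) /\
      almost_decreasing beta (fun t => th t x y / t `^ pp)).

Definition C4 {R : realType} {d : nat} (Om : set 'rV[R]_d)
  (th : R -> 'rV[R]_d -> 'rV[R]_d -> R) : Prop :=
  exists c1 : R, 0 < c1 /\
    ae_pairs Om (fun x y => c1^-1 <= th 1 x y <= c1 /\ th 0 x y = 0 /\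
      forall t, 0 < t -> 0 < th t x y).

Definition C5 {R : realType} {d : nat} (Om : set 'rV[R]_d)
  (th : R -> 'rV[R]_d -> 'rV[R]_d -> R) : Prop :=
  exists c2 : R, 1 < c2 /\
    ae_pairs Om (fun x y => forall t, 0 < t ->
      derivable (fun z => th z x y) t 1 /\
      0 < t * derive1 (fun z => th z x y) t <= c2 * th t x y).

Definition C2_pos {R : realType} (f : R -> R) : Prop :=
  forall z, 0 < z -> derivable f z 1 /\ derivable (derive1 f) z 1 /\
    {for z, continuous (derive1 (derive1 f))}.

(* Write f = psi phi.  By the product rule
   f'' = psi'' phi + 2 psi' phi' + psi phi'',
   and the hypotheses on psi'' and phi'', together with the tangent inequality
   phi(z) <= z phi'(z), give f'' >= (c7 - c10) f / z^2.  Three applications of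
   the mean value theorem turn this bound into a uniform gain in midpoint
   convexity, which is (C2) for f.  The tangent inequality holds because phi is
   convex (by (C2), phi is midpoint convex, hence phi'' >= 0 as phi'' is
   continuous) and takes arbitrarily small values near 0 (by (C3)).  The other
   conditions follow from the product rule, from products of (almost) monotone
   functions, and from the measurability of products for the Caratheodory
   sigma-algebra of the Lebesgue outer measure. *)

From HB Require Import structures.
From mathcomp Require Import all_boot all_order all_algebra.
From mathcomp Require Import all_classical all_reals all_analysis.
From mathcomp Require Import measurable_realfun ring lra.

Set Implicit Arguments.
Unset Strict Implicit.
Unset Printing Implicit Defensive.

Import Order.TTheory GRing.Theory Num.Theory.
Import numFieldNormedType.Exports.

Local Open Scope classical_set_scope.
Local Open Scope ring_scope.

(** * Lebesgue outer measure *)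

Section boxvol.
Variables (R : realType) (n : nat).
Implicit Types a b : 'rV[R]_n.

Lemma boxvol_ge0 a b : (forall i, a ord0 i <= b ord0 i) -> 0 <= boxvol a b.
Proof. by move=> ab; apply: prodr_ge0 => i _; rewrite subr_ge0. Qed.

Lemma eq_boxvol a b a' b' :
  (forall i, a ord0 i <= b ord0 i) -> (forall i, a' ord0 i <= b' ord0 i) ->
  box a b = box a' b' -> boxvol a b = boxvol a' b'.
Proof.
move=> ab ab' E.
have [ina inb] : box a b a /\ box a b b by split => i; rewrite lexx ab.
have [ina' inb'] : box a' b' a' /\ box a' b' b' by split => i; rewrite lexx ab'.
rewrite E in ina inb; rewrite -E in ina' inb'.
apply: eq_bigr => i _; congr (_ - _); apply/eqP; rewrite eq_le.
  by case/andP: (inb i) => _ ->; case/andP: (inb' i) => _ ->.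
by case/andP: (ina' i) => -> _; case/andP: (ina i) => -> _.
Qed.

End boxvol.

Section lebesgue_outer_measure.
Variables (R : realType) (n : nat).
Local Open Scope ereal_scope.
Implicit Types (a b : 'rV[R]_n.+1) (A X : set 'rV[R]_n.+1).

(* The volume of a nonempty closed box (well defined by [eq_boxvol]), 0 on the
   empty set and +oo on all other sets; [lebesgue_outer] is its outer extension
   [mu_ext], which provides the outer measure axioms. *)
Definition box_volume A : \bar R :=
  ereal_inf [set S | exists a b, (forall i, (a ord0 i <= b ord0 i)%R) /\
    (A = set0 \/ A = box a b) /\ S = (boxvol a b)%:E].

Lemma box_volume_ge0 A : 0 <= box_volume A.
Proof.
apply: le_ereal_inf_tmp => _ [a [b [ab [_ ->]]]].
by rewrite lee_fin boxvol_ge0.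
Qed.

Lemma box_volume0 : box_volume set0 = 0.
Proof.
apply/eqP; rewrite eq_le box_volume_ge0 andbT.
apply: ereal_inf_lbound; exists 0%R, 0%R; split => [i|]; first by rewrite mxE.
by split; [left|rewrite /boxvol big_ord_recl !mxE subrr mul0r].
Qed.

Lemma box_volume_box a b : (forall i, (a ord0 i <= b ord0 i)%R) ->
  box_volume (box a b) <= (boxvol a b)%:E.
Proof.
by move=> ab; apply: ereal_inf_lbound; exists a, b; split => //; split; first by right.
Qed.

Lemma box_volume_attained A : box_volume A < +oo -> exists a b,
  [/\ forall i, (a ord0 i <= b ord0 i)%R, A `<=` box a b &
      (boxvol a b)%:E <= box_volume A].
Proof.
rewrite {1}/box_volume; set S := (X in ereal_inf X) => Afin.
have /set0P[_ [a [b [ab [[AE|AE] _]]]]] : S != set0.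
- by apply/eqP => S0; move: Afin; rewrite S0 ereal_inf0 ltxx.
- exists 0%R, 0%R; split => [i||]; first by rewrite mxE.
    by rewrite AE.
  by rewrite AE box_volume0 /boxvol big_ord_recl !mxE subrr mul0r.
exists a, b; split; [by []|by rewrite AE|rewrite AE].
apply: le_ereal_inf_tmp => _ [a' [b' [ab' [E ->]]]].
have ina : box a b a by move=> i; rewrite lexx ab.
by case: E => [E|/(eq_boxvol ab ab') ->//]; rewrite E in ina.
Qed.

Lemma lebesgue_outer_le_cover X (A : (set 'rV[R]_n.+1)^nat) :
  X `<=` \bigcup_k A k -> lebesgue_outer X <= \sum_(k <oo) box_volume (A k).
Proof.
move=> XA; have [[k Ak]|/forallNP Afin] := pselect (exists k, box_volume (A k) = +oo).
  rewrite (eseries_pinfty _ _ Ak) ?leey // => i _.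
  by rewrite gt_eqF // (lt_le_trans _ (box_volume_ge0 _)).
have /choice[ab /= abP] k : exists ab : 'rV[R]_n.+1 * 'rV[R]_n.+1,
    (forall i, (ab.1 ord0 i <= ab.2 ord0 i)%R) /\ A k `<=` box ab.1 ab.2 /\
    (boxvol ab.1 ab.2)%:E <= box_volume (A k).
  have /box_volume_attained[a [b [ab Aab vol_le]]] : box_volume (A k) < +oo.
    by rewrite ltey; exact/eqP/Afin.
  by exists (a, b).
apply: (@le_trans _ _ (\sum_(k <oo) (boxvol (ab k).1 (ab k).2)%:E)); last first.
  apply: lee_nneseries => [k _ _|k _]; last exact: (abP k).2.2.
  by rewrite lee_fin boxvol_ge0 //; exact: (abP k).1.
apply: ereal_inf_lbound; exists (fun k => (ab k).1), (fun k => (ab k).2).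
split; first by move=> k; exact: (abP k).1.
by split => // x /XA[k _ Akx]; exists k => //; exact: (abP k).2.1.
Qed.

(* Every subset is measurable here, so [mu_ext] ranges over all countable covers. *)
Local Notation rV_sets := (g_sigma_algebraType (@setT (set 'rV[R]_n.+1))).

Lemma lebesgue_outerE :
  @lebesgue_outer R n.+1 = mu_ext (box_volume : set rV_sets -> _).
Proof.
apply/funext => X; apply/eqP; rewrite eq_le; apply/andP; split.
  by apply: le_ereal_inf_tmp => _ [A [_ XA] <-]; exact: lebesgue_outer_le_cover.
apply: le_ereal_inf_tmp => _ [a [b [ab [Xab ->]]]].
apply: (@le_trans _ _ (\sum_(k <oo) box_volume (box (a k) (b k)))).
  apply: ereal_inf_lbound; exists (fun k => box (a k) (b k)) => //.
  by split => // k; exact: sub_sigma_algebra.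
by apply: lee_nneseries => [k _ _|k _]; [exact: box_volume_ge0|exact: box_volume_box].
Qed.

Local Notation lo := (@lebesgue_outer R n.+1).

Lemma lebesgue_outer0 : lo set0 = 0.
Proof. by rewrite lebesgue_outerE; apply: mu_ext0; [exact: box_volume0|exact: box_volume_ge0]. Qed.

Lemma lebesgue_outer_ge0 A : 0 <= lo A.
Proof. by rewrite lebesgue_outerE; apply: mu_ext_ge0; exact: box_volume_ge0. Qed.

Lemma le_lebesgue_outer : {homo lo : A B / A `<=` B >-> A <= B}.
Proof. by rewrite lebesgue_outerE; exact: (le_mu_ext (box_volume : set rV_sets -> _)). Qed.

Lemma lebesgue_outer_sigma_subadditive : sigma_subadditive lo.
Proof.
rewrite lebesgue_outerE.
exact: (mu_ext_sigma_subadditive (mu := box_volume : set rV_sets -> _) box_volume_ge0).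
Qed.

HB.instance Definition _ := isOuterMeasure.Build R 'rV[R]_n.+1 lo
  lebesgue_outer0 lebesgue_outer_ge0 le_lebesgue_outer lebesgue_outer_sigma_subadditive.

End lebesgue_outer_measure.

Lemma lebesgue_outer_rV0_ge1 (R : realType) (A : set 'rV[R]_0) : (1 <= lebesgue_outer A)%E.
Proof.
apply: le_ereal_inf_tmp => _ [a [b [_ [_ ->]]]].
apply: le_trans (nneseries_lim_ge 1 _); last by move=> k _ _; rewrite lee_fin /boxvol big_ord0.
by rewrite big_nat1 /boxvol big_ord0.
Qed.

Lemma lebesgue_outer_bigcup_null (R : realType) n (F : (set 'rV[R]_n)^nat) :
  (forall k, lebesgue_outer (F k) = 0%E) -> lebesgue_outer (\bigcup_k F k) = 0%E.
Proof.
case: n F => [|n] F F0.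
  by have := lebesgue_outer_rV0_ge1 (F 0%N); rewrite F0 lee_fin ler10.
apply/eqP; rewrite eq_le outer_measure_ge0 andbT.
apply: le_trans (outer_measure_sigma_subadditive _ F) _.
by rewrite eseries0 // => k _ _; exact: F0.
Qed.

Lemma lebesgue_outer_sub_null (R : realType) n (A B : set 'rV[R]_n) :
  A `<=` B -> lebesgue_outer B = 0%E -> lebesgue_outer A = 0%E.
Proof.
case: n A B => [|n] A B AB B0.
  by have := lebesgue_outer_rV0_ge1 B; rewrite B0 lee_fin ler10.
by apply/eqP; rewrite eq_le outer_measure_ge0 andbT -B0 le_outer_measure.
Qed.

(** * Almost everywhere on Omega x Omega *)

Section ae_pairs.
Variables (R : realType) (d : nat) (Om : set 'rV[R]_d).
Implicit Types P Q : 'rV[R]_d -> 'rV[R]_d -> Prop.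

Lemma ae_pairsW P Q : (forall x y, Om x -> Om y -> P x y -> Q x y) ->
  ae_pairs Om P -> ae_pairs Om Q.
Proof.
move=> PQ; apply: lebesgue_outer_sub_null => _ [[x y] [/= Ox [Oy nQ]] <-].
by exists (x, y) => //; split => //; split => // /(PQ _ _ Ox Oy).
Qed.

Lemma ae_pairs_forall (P : nat -> 'rV[R]_d -> 'rV[R]_d -> Prop) :
  (forall k, ae_pairs Om (P k)) -> ae_pairs Om (fun x y => forall k, P k x y).
Proof.
move=> P0; apply: lebesgue_outer_sub_null (lebesgue_outer_bigcup_null P0).
move=> _ [[x y] [/= Ox [Oy /existsNP[k nPk]]] <-].
by exists k => //; exists (x, y).
Qed.

Lemma ae_pairs_and P Q :
  ae_pairs Om P -> ae_pairs Om Q -> ae_pairs Om (fun x y => P x y /\ Q x y).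
Proof.
move=> aP aQ; apply: ae_pairsW (ae_pairs_forall (P := fun k => if k is 0%N then P else Q) _).
  by move=> x y _ _ PQ; split; [exact: (PQ 0%N)|exact: (PQ 1%N)].
by case.
Qed.

End ae_pairs.

Lemma not_ae_pairs_rV0 (R : realType) (Om : set 'rV[R]_0)
  (P : 'rV[R]_0 -> 'rV[R]_0 -> Prop) : ~ ae_pairs Om P.
Proof.
rewrite /ae_pairs; move: (pairs_to_row _) => A A0.
by have := lebesgue_outer_rV0_ge1 A; rewrite A0 lee_fin ler10.
Qed.

(** * Measurability *)

Section caratheodory.
Variables (R : realType) (n : nat).
Local Notation L := (caratheodory_type (@lebesgue_outer R n.+1)).
Implicit Types (E D : set 'rV[R]_n.+1) (f : 'rV[R]_n.+1 -> R).

Lemma LmeasurableP E : Lmeasurable E <-> measurable (E : set L).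
Proof.
split => [mE|mE X]; last by rewrite setDE; exact: mE.
by change ((@lebesgue_outer R n.+1).-caratheodory E) => X; rewrite -setDE; exact: mE.
Qed.

Lemma Lmeasurable_fun_domain D f : Lmeasurable_fun D f -> measurable (D : set L).
Proof.
move=> mf; have -> : D = \bigcup_k (D `&` [set x | - (k%:R) < f x]).
  apply/seteqP; split => [x Dx|x [k _ []//]].
  exists (Num.bound `|f x|) => //; split => //=.
  by have := archi_boundP (normr_ge0 (f x)); rewrite ltr_norml => /andP[].
by apply: bigcupT_measurable => k; apply/LmeasurableP; exact: mf.
Qed.

Lemma Lmeasurable_funP D f : measurable (D : set L) ->
  Lmeasurable_fun D f <-> measurable_fun (D : set L) f.
Proof.
have preimE a : f @^-1` `]a, +oo[ = [set x | a < f x].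
  by apply/seteqP; split => x /=; rewrite in_itv /= andbT.
move=> mD; split => [mf|mf a].
  apply: (measurability _ (RGenOInfty.measurableE R)) => // _ [_ [a ->] <-].
  by rewrite preimE; apply/LmeasurableP; exact: mf.
by apply/LmeasurableP; rewrite -preimE; exact: mf mD _ (measurable_itv _).
Qed.

End caratheodory.

Lemma Lmeasurable_funM (R : realType) n (D : set 'rV[R]_n) (f g : 'rV[R]_n -> R) :
  (0 < n)%N -> Lmeasurable_fun D f -> Lmeasurable_fun D g ->
  Lmeasurable_fun D (fun x => f x * g x).
Proof.
case: n D f g => // n D f g _ mf mg; have mD := Lmeasurable_fun_domain mf.
by apply/(Lmeasurable_funP _ mD); apply: measurable_funM; exact/(Lmeasurable_funP _ mD).
Qed.

(** * Calculus on (0, +oo) *)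

Section derivable_on_pos.
Variables (R : realType) (f : R -> R).
Hypothesis df : forall z, 0 < z -> derivable f z 1.

Lemma MVT_pos a b : 0 < a -> a < b ->
  exists2 c, a < c < b & f b - f a = derive1 f c * (b - a).
Proof.
move=> a0 ab; have [z||c] := @MVT R f (derive1 f) a b ab.
- rewrite in_itv /= => /andP[az _]; rewrite derive1E.
  by apply/derivableP/df; exact: lt_trans az.
- apply: derivable_within_continuous => z; rewrite in_itv /= => /andP[az _].
  by apply: df; exact: lt_le_trans az.
- by rewrite in_itv; exists c.
Qed.

Lemma ler_derive1_sub a b L : 0 < a -> a <= b ->
  (forall z, a < z < b -> L <= derive1 f z) -> L * (b - a) <= f b - f a.
Proof.
move=> a0; rewrite le_eqVlt => /predU1P[<-|ab] Lf'; first by rewrite !subrr mulr0.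
by have [c /Lf' Lc ->] := MVT_pos a0 ab; rewrite ler_wpM2r // subr_ge0 ltW.
Qed.

Lemma ger_derive1_sub a b U : 0 < a -> a <= b ->
  (forall z, a < z < b -> derive1 f z <= U) -> f b - f a <= U * (b - a).
Proof.
move=> a0; rewrite le_eqVlt => /predU1P[<-|ab] f'U; first by rewrite !subrr mulr0.
by have [c /f'U cU ->] := MVT_pos a0 ab; rewrite ler_wpM2r // subr_ge0 ltW.
Qed.

Lemma ger0_derive1_ndecr_pos : (forall z, 0 < z -> 0 <= derive1 f z) ->
  forall s t, 0 < s -> s <= t -> f s <= f t.
Proof.
move=> f'0 s t s0 st; rewrite -subr_ge0.
have := ler_derive1_sub s0 st (L := 0); rewrite mul0r; apply => z /andP[sz _].
by apply: f'0; exact: lt_trans sz.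
Qed.

End derivable_on_pos.

Section twice_derivable_on_pos.
Variables (R : realType) (f : R -> R).
Hypotheses (df : forall z, 0 < z -> derivable f z 1)
  (ddf : forall z, 0 < z -> derivable (derive1 f) z 1).

(* With m = (s + t) / 2 and m2 = (s + 3 t) / 4, the mean value theorem on
   [s, m], [m, m2] and [m2, t] shows that f(m) lies below the chord by at least
   (f'(m2) - f'(m)) (t - s) / 8, and f' grows by at least c f(m) / t^2 * (m2 - m). *)
Lemma midpoint_uniform_convex_lt c eps s t : 0 < c -> 0 <= eps -> 0 < s -> s < t ->
  (forall z, 0 < z -> 0 <= f z) -> (forall z, 0 < z -> 0 <= derive1 f z) ->
  (forall z, 0 < z -> c / z ^+ 2 * f z <= derive1 (derive1 f) z) ->
  eps * t <= t - s ->
  f ((s + t) / 2) * (1 + c * eps ^+ 2 / 32) <= (f s + f t) / 2.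
Proof.
move=> c0 e0 s0 st f0 f'0 f''_ge est; have t0 := lt_trans s0 st.
have f''0 z : 0 < z -> 0 <= derive1 (derive1 f) z.
  move=> z0; apply: le_trans (f''_ge z z0).
  by rewrite mulr_ge0 ?f0 // divr_ge0 ?sqr_ge0 ?ltW.
have f_ndecr := ger0_derive1_ndecr_pos df f'0.
have f'_ndecr := ger0_derive1_ndecr_pos ddf f''0.
set m := (s + t) / 2; set m2 := (s + 3 * t) / 4.
have [sm mm2 m2t] : [/\ s < m, m < m2 & m2 < t] by split; rewrite /m /m2; lra.
have m0 := lt_trans s0 sm; have m20 := lt_trans m0 mm2.
have left_secant : f m - f s <= derive1 f m * (m - s).
  apply: ger_derive1_sub => // [|z /andP[sz zm]]; first exact: ltW.
  by apply: f'_ndecr; [exact: lt_trans sz|exact: ltW].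
have mid_secant : derive1 f m * (m2 - m) <= f m2 - f m.
  apply: ler_derive1_sub => // [|z /andP[mz _]]; first exact: ltW.
  by apply: f'_ndecr => //; exact: ltW.
have right_secant : derive1 f m2 * (t - m2) <= f t - f m2.
  apply: ler_derive1_sub => // [|z /andP[m2z _]]; first exact: ltW.
  by apply: f'_ndecr => //; exact: ltW.
set K := c / t ^+ 2 * f m.
have derive1_gap : K * (m2 - m) <= derive1 f m2 - derive1 f m.
  apply: ler_derive1_sub => // [|z /andP[mz zm2]]; first exact: ltW.
  have z0 := lt_trans m0 mz; apply: le_trans (f''_ge z z0).
  apply: ler_pM; first by rewrite divr_ge0 ?sqr_ge0 // ltW.
  - exact: f0.
  - rewrite ler_pM2l // lef_pV2 ?posrE ?exprn_gt0 // ler_sqr ?nnegrE; last 2 first.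
    + exact: ltW.
    + exact: ltW.
    exact/ltW/(lt_trans zm2).
  - by apply: f_ndecr => //; exact: ltW.
have ratio : eps ^+ 2 <= (t - s) ^+ 2 / t ^+ 2.
  rewrite ler_pdivlMr ?exprn_gt0 // -exprMn ler_sqr ?nnegrE //.
  - by rewrite mulr_ge0 // ltW.
  - by rewrite subr_ge0; exact: ltW.
have K_gap : c * eps ^+ 2 / 32 * f m <= K * (t - s) ^+ 2 / 32.
  have -> : K * (t - s) ^+ 2 / 32 = c * ((t - s) ^+ 2 / t ^+ 2) / 32 * f m.
    by rewrite /K; field; rewrite gt_eqF.
  by rewrite ler_wpM2r ?f0 // ler_wpM2r // ler_wpM2l //; exact: ltW.
have m2t0 : 0 <= t - m2 by rewrite subr_ge0; exact: ltW.
have := ler_wpM2r m2t0 derive1_gap.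
move: left_secant mid_secant right_secant K_gap; rewrite /m2 /m.
clear -c0; lra.
Qed.

Lemma midpoint_uniform_convex c eps : 0 < c -> 0 < eps ->
  (forall z, 0 < z -> 0 <= f z) -> (forall z, 0 < z -> 0 <= derive1 f z) ->
  (forall z, 0 < z -> c / z ^+ 2 * f z <= derive1 (derive1 f) z) ->
  forall s t, 0 < s -> 0 < t -> eps * Num.max s t <= `|s - t| ->
  f ((s + t) / 2) * (1 + c * eps ^+ 2 / 32) <= (f s + f t) / 2.
Proof.
move=> c0 e0 f0 f'0 f''_ge s t s0 t0; case: (ltgtP s t) => [st|ts|<-].
- rewrite distrC ger0_norm; last by rewrite subr_ge0 ltW.
  exact: midpoint_uniform_convex_lt c0 (ltW e0) s0 st f0 f'0 f''_ge.
- rewrite [s + t]addrC [f s + _]addrC ger0_norm; last by rewrite subr_ge0 ltW.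
  exact: midpoint_uniform_convex_lt c0 (ltW e0) t0 ts f0 f'0 f''_ge.
- by rewrite subrr normr0 => /(lt_le_trans (mulr_gt0 e0 s0)); rewrite ltxx.
Qed.

(* If f'' < 0 near z, the second difference f(z + h) + f(z - h) - 2 f(z) equals
   f''(c3) (c1 - c2) h < 0 for suitable mean value points c1, c2, c3. *)
Lemma midpoint_convex_derive2_ge0 z : 0 < z ->
  {for z, continuous (derive1 (derive1 f))} ->
  (forall s t, 0 < s -> 0 < t -> f ((s + t) / 2) <= (f s + f t) / 2) ->
  0 <= derive1 (derive1 f) z.
Proof.
move=> z0 f''z fmid; rewrite leNgt; apply/negP => f''z_lt0.
have /nbhs_ballP[e e0 f''_lt0] : \forall w \near z, derive1 (derive1 f) w < 0.
  exact: cvgr_lt f''z _ f''z_lt0.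
have me : Num.min e z <= e by rewrite ge_min lexx.
have mz : Num.min e z <= z by rewrite ge_min lexx orbT.
have m0 : 0 < Num.min e z by rewrite lt_min e0 z0.
set h := Num.min e z / 2.
have [h0 he hz] : [/\ 0 < h, h < e & h < z] by rewrite /h; split; lra.
have [zh0 zhz zzh] : [/\ 0 < z - h, z - h < z & z < z + h] by split; lra.
have [c1 /andP[zc1 c1zh] E1] := MVT_pos df z0 zzh.
have [c2 /andP[zhc2 c2z] E2] := MVT_pos df zh0 zhz.
have [c3 /andP[c2c3 c3c1] E3] := MVT_pos ddf (lt_trans zh0 zhc2) (lt_trans c2z zc1).
have f''c3 : derive1 (derive1 f) c3 < 0.
  apply: f''_lt0; rewrite /ball /= ltr_distlC; apply/andP.
  by split; clear -zhc2 c2c3 c3c1 c1zh he; lra.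
have := fmid _ _ zh0 (lt_trans z0 zzh).
rewrite (_ : (z - h + (z + h)) / 2 = z); last by field.
rewrite (_ : z + h - z = h) in E1; last by ring.
rewrite (_ : z - (z - h) = h) in E2; last by ring.
move=> fmid_z; have : 0 <= derive1 (derive1 f) c3 * ((c1 - c2) * h).
  by rewrite mulrA -E3 mulrBl -E1 -E2; clear -fmid_z; lra.
have c1c2h : 0 < (c1 - c2) * h by rewrite mulr_gt0 // subr_gt0; exact: lt_trans c2z zc1.
by rewrite pmulr_lge0 // leNgt f''c3.
Qed.

Lemma convex_le_mul_derive1 z : 0 < z ->
  (forall w, 0 < w -> 0 <= derive1 (derive1 f) w) -> 0 <= derive1 f z ->
  (forall e, 0 < e -> exists2 s, 0 < s < z & f s <= e) ->
  f z <= z * derive1 f z.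
Proof.
move=> z0 f''0 f'z fsmall; apply/ler_addgt0Pr => e e0.
have [s /andP[s0 sz] fs] := fsmall e e0.
have : f z - f s <= derive1 f z * (z - s).
  apply: ger_derive1_sub => // [|w /andP[sw wz]]; first exact: ltW.
  by apply: (ger0_derive1_ndecr_pos ddf f''0); [exact: lt_trans sw|exact: ltW].
have : 0 <= s * derive1 f z by rewrite mulr_ge0 // ltW.
clear -fs; lra.
Qed.

End twice_derivable_on_pos.

Lemma almost_increasing_small (R : realType) (g : R -> R) beta p z : 1 <= p -> 0 < z ->
  almost_increasing beta (fun t => g t / t `^ p) ->
  forall e, 0 < e -> exists2 s, 0 < s < z & g s <= e.
Proof.
move=> p1 z0 ginc e e0.
set K := `|beta * g 1| + 1.
have K0 : 0 < K by rewrite ltr_pwDr // normr_ge0.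
set s := Num.min (z / 2) (Num.min 1 (e / K)).
have s0 : 0 < s by rewrite !lt_min ltr01 !divr_gt0.
have sz : s < z by apply: le_lt_trans (_ : s <= z / 2) _; rewrite ?ge_min ?lexx //; lra.
have s1 : s <= 1 by rewrite !ge_min lexx !orbT.
have seK : s <= e / K by rewrite !ge_min lexx !orbT.
exists s; first by rewrite s0.
have gsK : g s <= K * s `^ p.
  have := ginc s 1 s0 s1; rewrite powR1 divr1 ler_pdivrMr ?powR_gt0 // => /le_trans; apply.
  by rewrite ler_wpM2r ?powR_ge0 // (le_trans (ler_norm _)) // lerDl.
have sps : s `^ p <= s by rewrite ge1r_powR // s0 s1.
apply: le_trans gsK _; apply: le_trans (_ : K * s <= _); first by rewrite ler_pM2l.
by rewrite mulrC -ler_pdivlMr.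
Qed.

Definition C2_at (R : realType) (g : R -> R) (eps delta : R) : Prop :=
  forall s t, 0 < s -> 0 < t -> eps * Num.max s t <= `|s - t| ->
    g ((s + t) / 2) <= (1 - delta) * ((g s + g t) / 2).

Lemma midpoint_convex_of_uniform (R : realType) (g : R -> R) :
  (forall z, 0 < z -> 0 <= g z) ->
  (forall k : nat, exists2 delta, 0 <= delta & C2_at g k.+1%:R^-1 delta) ->
  forall s t, 0 < s -> 0 < t -> g ((s + t) / 2) <= (g s + g t) / 2.
Proof.
move=> g0 guconv s t s0 t0.
have avg0 : 0 <= (g s + g t) / 2 by rewrite divr_ge0 // addr_ge0 // g0.
have [<-|st] := eqVneq s t.
  have half_double (x : R) : (x + x) / 2 = x by field.
  by rewrite !half_double.
set r := `|s - t| / Num.max s t.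
have M0 : 0 < Num.max s t by rewrite lt_max s0.
have r0 : 0 < r by rewrite divr_gt0 // normr_gt0 subr_eq0.
have [delta delta0 /(_ s t s0 t0) gk] := guconv (Num.bound r^-1).
apply: le_trans (gk _) _; last by rewrite ler_piMl // gerDl oppr_le0.
rewrite -ler_pdivlMr // -/r -[leRHS]invrK lef_pV2 ?posrE ?invr_gt0 ?ltr0n //.
apply: le_trans (ltW (archi_boundP _)) _; first by rewrite invr_ge0 ltW.
by rewrite ler_nat.
Qed.

Lemma uniform_convex_le_mul_derive1 (R : realType) (g : R -> R) p beta :
  1 <= p -> C2_pos g ->
  (forall z, 0 < z -> 0 <= g z) -> (forall z, 0 < z -> 0 <= derive1 g z) ->
  almost_increasing beta (fun t => g t / t `^ p) ->
  (forall k : nat, exists2 delta, 0 <= delta & C2_at g k.+1%:R^-1 delta) ->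
  forall z, 0 < z -> g z <= z * derive1 g z.
Proof.
move=> p1 gC2 g0 g'0 ginc guconv z z0.
have dg w : 0 < w -> derivable g w 1 by move=> /gC2[].
have ddg w : 0 < w -> derivable (derive1 g) w 1 by move=> /gC2[_ []].
have g''0 w : 0 < w -> 0 <= derive1 (derive1 g) w.
  move=> w0; apply: midpoint_convex_derive2_ge0 => //; first by case: (gC2 w w0) => _ [].
  exact: midpoint_convex_of_uniform.
exact: convex_le_mul_derive1 (g'0 z z0) (almost_increasing_small p1 z0 ginc).
Qed.

Lemma derive1_mul (R : realType) (P Q : R -> R) z : derivable P z 1 -> derivable Q z 1 ->
  derive1 (fun w => P w * Q w) z = derive1 P z * Q z + P z * derive1 Q z.
Proof. by move=> dP dQ; rewrite !derive1E (deriveM dP dQ) /GRing.scale /= addrC mulrC. Qed.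

Section product_on_pos.
Variables (R : realType) (P Q : R -> R).
Hypotheses (PC2 : C2_pos P) (QC2 : C2_pos Q).

Let dP z : 0 < z -> derivable P z 1. Proof. by move=> /PC2[]. Qed.
Let dQ z : 0 < z -> derivable Q z 1. Proof. by move=> /QC2[]. Qed.
Let ddP z : 0 < z -> derivable (derive1 P) z 1. Proof. by move=> /PC2[_ []]. Qed.
Let ddQ z : 0 < z -> derivable (derive1 Q) z 1. Proof. by move=> /QC2[_ []]. Qed.

Let PQ' := derive1 P * Q + P * derive1 Q.

Let derive1_mul_near (z : R) : 0 < z ->
  \forall w \near z, PQ' w = derive1 (fun w => P w * Q w) w.
Proof.
by move=> /lt_nbhsr; apply: filterS => w w0; rewrite derive1_mul //; [exact: dP|exact: dQ].
Qed.

Lemma derivable_derive1_mul (z : R) : 0 < z ->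
  derivable (derive1 (fun w => P w * Q w)) z 1.
Proof.
move=> z0; apply: near_eq_derivable (derive1_mul_near z0) _.
by apply: derivableD; apply: derivableM; auto.
Qed.

Lemma derive2_mul (z : R) : 0 < z -> derive1 (derive1 (fun w => P w * Q w)) z =
  derive1 (derive1 P) z * Q z + 2 * (derive1 P z * derive1 Q z) +
  P z * derive1 (derive1 Q) z.
Proof.
move=> z0; rewrite derive1E -(near_eq_derive _ (derive1_mul_near z0)).
rewrite deriveD; try by apply: derivableM; auto.
rewrite (deriveM (ddP z0) (dQ z0)) (deriveM (dP z0) (ddQ z0)) /GRing.scale /= -!derive1E.
by move: (P z) (Q z) (derive1 P z) (derive1 Q z) (derive1 (derive1 P) z) => p q p1 q1 p2; ring.
Qed.

Lemma derive2_mul_ge c7 c9 c10 (z : R) : 0 < z -> c9 <= 2 ->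
  0 <= P z -> 0 <= derive1 P z -> 0 <= Q z -> Q z <= z * derive1 Q z ->
  - (c9 / z) * derive1 P z - c10 / z ^+ 2 * P z <= derive1 (derive1 P) z ->
  c7 / z ^+ 2 * Q z <= derive1 (derive1 Q) z ->
  (c7 - c10) / z ^+ 2 * (P z * Q z) <= derive1 (derive1 (fun w => P w * Q w)) z.
Proof.
move=> z0 c92 P0 P'0 Q0 Q_tangent P''_ge Q''_ge; rewrite derive2_mul //.
have := ler_wpM2r Q0 P''_ge; have := ler_wpM2l P0 Q''_ge.
have Q'_ge : Q z / z <= derive1 Q z by rewrite ler_pdivrMr // mulrC.
have := ler_wpM2l P'0 Q'_ge.
have : 0 <= (2 - c9) * (derive1 P z * (Q z / z)).
  by rewrite mulr_ge0 ?subr_ge0 // mulr_ge0 // divr_ge0 // ltW.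
rewrite -!exprVn /=.
move: (P z) (Q z) (derive1 P z) (derive1 Q z) (derive1 (derive1 P) z).
move: (derive1 (derive1 Q) z) z^-1 => q2 u p q p1 q1 p2.
by rewrite -!mulrA; clear; lra.
Qed.

Lemma midpoint_uniform_convex_mul c7 c9 c10 eps : c9 <= 2 -> c10 < c7 -> 0 < eps ->
  (forall z, 0 < z -> 0 <= P z) -> (forall z, 0 < z -> 0 <= derive1 P z) ->
  (forall z, 0 < z -> 0 <= Q z) -> (forall z, 0 < z -> 0 <= derive1 Q z) ->
  (forall z, 0 < z -> Q z <= z * derive1 Q z) ->
  (forall z, 0 < z ->
     - (c9 / z) * derive1 P z - c10 / z ^+ 2 * P z <= derive1 (derive1 P) z) ->
  (forall z, 0 < z -> c7 / z ^+ 2 * Q z <= derive1 (derive1 Q) z) ->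
  forall s t, 0 < s -> 0 < t -> eps * Num.max s t <= `|s - t| ->
  P ((s + t) / 2) * Q ((s + t) / 2) * (1 + (c7 - c10) * eps ^+ 2 / 32) <=
    (P s * Q s + P t * Q t) / 2.
Proof.
move=> c92 c107 e0 P0 P'0 Q0 Q'0 Q_tangent P''_ge Q''_ge.
apply: (midpoint_uniform_convex (f := fun w => P w * Q w)) => [z z0||||z z0|z z0|z z0].
- by apply: derivableM; [exact: dP|exact: dQ].
- exact: derivable_derive1_mul.
- by rewrite subr_gt0.
- exact: e0.
- by rewrite mulr_ge0 ?P0 ?Q0.
- rewrite derive1_mul; [|exact: dP|exact: dQ].
  by rewrite addr_ge0 // mulr_ge0 ?P'0 ?Q0 ?P0 ?Q'0.
- exact: derive2_mul_ge (P0 z z0) (P'0 z z0) (Q0 z z0) (Q_tangent z z0)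
    (P''_ge z z0) (Q''_ge z z0).
Qed.

End product_on_pos.

Section almost_monotone.
Variable R : realType.
Implicit Types g h : R -> R.

Lemma almost_increasingMl beta g h : 0 <= beta ->
  (forall t, 0 < t -> 0 <= g t) -> (forall t, 0 < t -> 0 <= h t) ->
  (forall s t, 0 < s -> s <= t -> h s <= h t) ->
  almost_increasing beta g -> almost_increasing beta (fun t => h t * g t).
Proof.
move=> beta0 g0 h0 h_ndecr ginc s t s0 st; have t0 := lt_le_trans s0 st.
apply: le_trans (ler_wpM2l (h0 s s0) (ginc s t s0 st)) _.
by rewrite mulrCA ler_wpM2l // ler_wpM2r ?g0 ?h_ndecr.
Qed.

Lemma almost_decreasingM beta g h :
  (forall t, 0 < t -> 0 <= g t) -> (forall t, 0 < t -> 0 <= h t) ->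
  (forall s t, 0 < s -> s <= t -> h t <= h s) ->
  almost_decreasing beta g -> almost_decreasing beta (fun t => g t * h t).
Proof.
move=> g0 h0 h_nincr gdec s t s0 st; have t0 := lt_le_trans s0 st.
by rewrite mulrA ler_pM ?g0 ?h0 ?gdec ?h_nincr.
Qed.

End almost_monotone.

Lemma C2_ae_uniform (R : realType) d (Om : set 'rV[R]_d)
  (th : R -> 'rV[R]_d -> 'rV[R]_d -> R) : C2 Om th -> ae_pairs Om (fun x y =>
    forall k : nat, exists2 delta, 0 <= delta & C2_at (fun z => th z x y) k.+1%:R^-1 delta).
Proof.
move=> thC2; apply: ae_pairs_forall => k.
have [|delta [/andP[delta0 _]]] := thC2 k.+1%:R^-1; first by rewrite invr_gt0.
by apply: ae_pairsW => x y _ _ thk; exists delta => //; exact: ltW.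
Qed.

(** * The product psi phi *)

Section product_conditions.
Variables (R : realType) (d : nat) (Om : set 'rV[R]_d).
Variables phi psi : R -> 'rV[R]_d -> 'rV[R]_d -> R.
Local Notation prod := (fun z x y => psi z x y * phi z x y).

Lemma C1_mul : (0 < d)%N -> C1 Om phi -> C1 Om psi -> C1 Om prod.
Proof.
move=> d0 phiC1 psiC1 u1 u2 u; apply: Lmeasurable_funM (psiC1 u1 u2 u) (phiC1 u1 u2 u).
by rewrite addn_gt0 d0.
Qed.

Lemma C4_mul : C4 Om phi -> C4 Om psi -> C4 Om prod.
Proof.
move=> [c [c0 phiC4]] [c' [c'0 psiC4]]; exists (c * c'); split; first exact: mulr_gt0.
apply: ae_pairsW (ae_pairs_and phiC4 psiC4) => x y _ _.
move=> [[/andP[phi1l phi1u] [phi0 phi_gt0]] [/andP[psi1l psi1u] [psi0 psi_gt0]]].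
have phi1_ge0 : 0 <= phi 1 x y by apply: le_trans phi1l; rewrite invr_ge0 ltW.
have psi1_ge0 : 0 <= psi 1 x y by apply: le_trans psi1l; rewrite invr_ge0 ltW.
split; [apply/andP; split|split].
- by rewrite invfM mulrC ler_pM // invr_ge0 ltW.
- by rewrite [c * _]mulrC ler_pM.
- by rewrite psi0 mul0r.
- by move=> t t0; rewrite mulr_gt0 ?phi_gt0 ?psi_gt0.
Qed.

Lemma C5_mul : C4 Om phi -> C4 Om psi -> C5 Om phi -> C5 Om psi -> C5 Om prod.
Proof.
move=> [? [_ phiC4]] [? [_ psiC4]] [c [c1 phiC5]] [c' [c'1 psiC5]].
exists (c + c'); split; first by rewrite ltr_wpDr // ltW // (lt_trans ltr01).
apply: ae_pairsW (ae_pairs_and (ae_pairs_and phiC4 psiC4) (ae_pairs_and phiC5 psiC5)).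
move=> x y _ _ [[[_ [_ phi_gt0]] [_ [_ psi_gt0]]] [phiC5x psiC5x]] t t0.
have [dphi /andP[phi'_gt0 phi'_le]] := phiC5x t t0.
have [dpsi /andP[psi'_gt0 psi'_le]] := psiC5x t t0.
split; first exact: derivableM.
rewrite derive1_mul // mulrDr [t * (_ * phi t x y)]mulrA [t * (psi t x y * _)]mulrCA.
apply/andP; split.
  by apply: addr_gt0; apply: mulr_gt0; rewrite ?phi_gt0 ?psi_gt0.
have := ler_wpM2r (ltW (phi_gt0 t t0)) psi'_le.
have := ler_wpM2l (ltW (psi_gt0 t t0)) phi'_le.
lra.
Qed.

Lemma C3_mul q : 0 <= q ->
  (forall t x y, 0 <= t -> Om x -> Om y -> 0 <= phi t x y) -> C3 Om phi ->
  ae_pairs Om (fun x y => (forall t, 0 <= t -> 0 <= psi t x y) /\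
    (forall s t, 0 <= s -> s <= t -> psi s x y <= psi t x y)) ->
  ae_pairs Om (fun x y => forall s t, 0 < s -> s <= t ->
    psi t x y / t `^ q <= psi s x y / s `^ q) ->
  C3 Om prod.
Proof.
move=> q0 phi0 [pm [pp [beta [pm1 [pmpp [beta1 phiC3]]]]]] psi_ndecr psi_q.
exists pm, (pp + q), beta; split => //; split; first by rewrite (le_trans pmpp) // lerDl.
split => //.
apply: ae_pairsW (ae_pairs_and phiC3 (ae_pairs_and psi_ndecr psi_q)).
move=> x y Ox Oy [[phi_inc phi_dec] [[psi0 psi_mono] psi_nincr]].
have phi_pow0 p t : 0 < t -> 0 <= phi t x y / t `^ p.
  by move=> t0; rewrite divr_ge0 ?powR_ge0 // phi0 // ltW.
split.
  under eq_fun do rewrite -mulrA.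
  apply: (almost_increasingMl (g := fun t => phi t x y / t `^ pm)
    (h := fun t => psi t x y)) => // [|t t0|t t0|s t s0 st].
  - exact: le_trans beta1.
  - exact: phi_pow0.
  - by rewrite psi0 // ltW.
  - by rewrite psi_mono // ltW.
have prodE t : 0 < t -> psi t x y * phi t x y / t `^ (pp + q) =
    phi t x y / t `^ pp * (psi t x y / t `^ q).
  by move=> t0; rewrite powRD ?(gt_eqF t0) ?implybT // invfM; ring.
have : almost_decreasing beta (fun t => phi t x y / t `^ pp * (psi t x y / t `^ q)).
  apply: almost_decreasingM => // [t t0|t t0]; first exact: phi_pow0.
  by rewrite divr_ge0 ?powR_ge0 // psi0 // ltW.
move=> prod_dec s t s0 st; rewrite !prodE //; first exact: prod_dec.
exact: lt_le_trans st.
Qed.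

Lemma C2_mul c7 c9 c10 : c9 < 2 -> c10 < c7 ->
  (forall t x y, 0 <= t -> Om x -> Om y -> 0 <= phi t x y) ->
  C2 Om phi -> C3 Om phi -> C5 Om phi ->
  ae_pairs Om (fun x y => C2_pos (fun z => phi z x y)) ->
  ae_pairs Om (fun x y => forall z, 0 < z ->
    c7 / z ^+ 2 * phi z x y <= derive1 (derive1 (fun z => phi z x y)) z) ->
  ae_pairs Om (fun x y => (forall t, 0 <= t -> 0 <= psi t x y) /\
    C2_pos (fun z => psi z x y)) ->
  C5 Om psi ->
  ae_pairs Om (fun x y => forall z, 0 < z ->
    - (c9 / z) * derive1 (fun z => psi z x y) z - c10 / z ^+ 2 * psi z x y
      <= derive1 (derive1 (fun z => psi z x y)) z) ->
  C2 Om prod.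
Proof.
move=> c92 c107 phi0 phiC2 [pm [? [beta [pm1 [_ [_ phiC3]]]]]] [? [_ phiC5]].
move=> phi_C2 phi''_ge
  psi_C2 [? [_ psiC5]] psi''_ge eps e0.
set a := (c7 - c10) * eps ^+ 2 / 32.
have a0 : 0 < a by rewrite !mulr_gt0 ?exprn_gt0 ?subr_gt0.
have a1 : 0 < 1 + a by lra.
exists (a / (1 + a)); split.
  by rewrite divr_gt0 //= ltr_pdivrMr // mul1r ltrDr.
apply: ae_pairsW (ae_pairs_and (ae_pairs_and (ae_pairs_and phiC3 phiC5) phi_C2)
  (ae_pairs_and (ae_pairs_and psi_C2 psiC5)
    (ae_pairs_and phi''_ge (ae_pairs_and psi''_ge (C2_ae_uniform phiC2))))).
move=> x y Ox Oy [[[[phi_inc _] phiC5x] phiC2x]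
  [[[psi0 psiC2x] psiC5x] [phi''x [psi''x phi_unifx]]]].
have phi_ge0 z : 0 < z -> 0 <= phi z x y by move=> z0; rewrite phi0 // ltW.
have psi_ge0 z : 0 < z -> 0 <= psi z x y by move=> z0; rewrite psi0 // ltW.
have phi'_ge0 z : 0 < z -> 0 <= derive1 (fun z => phi z x y) z.
  by move=> z0; have [_ /andP[/ltW + _]] := phiC5x z z0; rewrite pmulr_rge0.
have psi'_ge0 z : 0 < z -> 0 <= derive1 (fun z => psi z x y) z.
  by move=> z0; have [_ /andP[/ltW + _]] := psiC5x z z0; rewrite pmulr_rge0.
have phi_tangent :=
  uniform_convex_le_mul_derive1 (ltW pm1) phiC2x phi_ge0 phi'_ge0 phi_inc phi_unifx.
move=> s t s0 t0 est.
have := midpoint_uniform_convex_mul psiC2x phiC2x (ltW c92) c107 e0 psi_ge0 psi'_ge0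
  phi_ge0 phi'_ge0 phi_tangent psi''x phi''x s0 t0 est.
have -> : 1 - a / (1 + a) = (1 + a)^-1 by field; rewrite gt_eqF.
by move=> mid; rewrite [_^-1 * _]mulrC ler_pdivlMr.
Qed.

End product_conditions.


Theorem theorem2p11 (R : realType) (d : nat) (Om : set 'rV[R]_d)
  (phi psi : R -> 'rV[R]_d -> 'rV[R]_d -> R) (c7 c9 c10 q : R) :
  (* Omega is a domain *)
  open Om -> connected Om -> Om !=set0 ->
  (* phi : [0,oo) x Omega x Omega -> [0,oo) satisfies (C1)-(C5) *)
  (forall t x y, 0 <= t -> Om x -> Om y -> 0 <= phi t x y) ->
  C1 Om phi -> C2 Om phi -> C3 Om phi -> C4 Om phi -> C5 Om phi ->
  ae_pairs Om (fun x y => C2_pos (fun z => phi z x y)) ->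
  ae_pairs Om (fun x y => forall z, 0 < z ->
    c7 / z ^+ 2 * phi z x y <= derive1 (derive1 (fun z => phi z x y)) z) ->
  (* psi *)
  ae_pairs Om (fun x y =>
    (forall t, 0 <= t -> 0 <= psi t x y) /\
    (forall s t, 0 <= s -> s <= t -> psi s x y <= psi t x y) /\
    C2_pos (fun z => psi z x y)) ->
  C1 Om psi -> C4 Om psi -> C5 Om psi ->
  c9 < 2 -> c10 < c7 ->
  ae_pairs Om (fun x y => forall z, 0 < z ->
    - (c9 / z) * derive1 (fun z => psi z x y) z - c10 / z ^+ 2 * psi z x y
      <= derive1 (derive1 (fun z => psi z x y)) z) ->
  0 <= q ->
  ae_pairs Om (fun x y => forall s t, 0 < s -> s <= t ->
    psi t x y / t `^ q <= psi s x y / s `^ q) ->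
  C1 Om (fun z x y => psi z x y * phi z x y) /\
  C2 Om (fun z x y => psi z x y * phi z x y) /\
  C3 Om (fun z x y => psi z x y * phi z x y) /\
  C4 Om (fun z x y => psi z x y * phi z x y) /\
  C5 Om (fun z x y => psi z x y * phi z x y).
Proof.
move=> _ _ _ phi0 phiC1 phiC2 phiC3 phiC4 phiC5 phi_C2 phi''_ge psi_props psiC1 psiC4 psiC5.
move=> c92 c107 psi''_ge q0 psi_q.
have [d0|d_gt0] := posnP d.
  by subst d; case: phiC4 => c [_ /not_ae_pairs_rV0].
have psi_ndecr : ae_pairs Om (fun x y => (forall t, 0 <= t -> 0 <= psi t x y) /\
    (forall s t, 0 <= s -> s <= t -> psi s x y <= psi t x y)).
  by apply: ae_pairsW psi_props => x y _ _ [psi0 [psi_mono _]].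
have psi_C2 : ae_pairs Om (fun x y => (forall t, 0 <= t -> 0 <= psi t x y) /\
    C2_pos (fun z => psi z x y)).
  by apply: ae_pairsW psi_props => x y _ _ [psi0 [_ psiC2]].
split; first exact: C1_mul.
split.
  exact: C2_mul c92 c107 phi0 phiC2 phiC3 phiC5 phi_C2 phi''_ge psi_C2 psiC5 psi''_ge.
split; first exact: C3_mul q0 phi0 phiC3 psi_ndecr psi_q.
by split; [exact: C4_mul|exact: C5_mul].
Qed.
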